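(* In a coherent differential summable resource category $\mathcal L$ (see context), let $l\in\mathcal L(X_0\otimes\cdots\otimes X_n,Y)$ and $i\in\{0,\dots,n\}$. Then $$D_i\mathcal M(l)=\mathcal M(S_il),$$ where $S_il=(Sl)\circ\varphi^i_{X_0,\dots,X_n}\in\mathcal L(X_0\otimes\cdots\otimes SX_i\otimes\cdots\otimes X_n,SY)$, and for $j\in\{0,1\}$, $$\lambda(\pi_j)\circ_!D_i\mathcal M(l)=\mathcal M(l)\circ_!\lambda(X_0\&\cdots\&\pi_j\&\cdots\&X_n)$$ (with $\pi_j$ in position $i$).
   Context: $\mathcal L$ is a symmetric monoidal closed category with finite products ($\&$, projections $p_i$, terminal $\top$), resource comonad $(!,\mathrm{der},\mathrm{dig})$ and Seely isomorphisms $m^0,m^2$; $m^n\in\mathcal L(!X_0\otimes\cdots\otimes!X_n,!(X_0\&\cdots\&X_n))$ is the induced $(n+1)$-ary Seely isomorphism. Kleisli category $\mathcal L_!$: $\mathcal L_!(X,Y)=\mathcal L(!X,Y)$, $g\circ_!f=g\circ!f\circ\mathrm{dig}_X$; $\lambda(h)=h\circ\mathrm{der}_X$. Objects in place of morphisms denote identities. For $l\in\mathcal L(X_0\otimes\cdots\otimes X_n,Y)$, $\mathcal M(l)=l\circ(\mathrm{der}_{X_0}\otimes\cdots\otimes\mathrm{der}_{X_n})\circ(m^n)^{-1}$. $\mathcal L$ has zero morphisms and a summability structure $(S,\pi_0,\pi_1,\sigma)$ ($\pi_0,\pi_1$ jointly monic, $f_0+f_1=\sigma\langle f_0,f_1\rangle$)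 satisfying the axioms of Ehrhard's coherent differentiation (homsets partial commutative monoids, composition and $\otimes$ distribute over defined sums); $\iota_0=\langle\mathrm{id},0\rangle$; $\tau$ with $\pi_0\tau=\pi_0\pi_0$, $\pi_1\tau=\pi_1\pi_0+\pi_0\pi_1$; flip $c$ with $\pi_i\pi_jc=\pi_j\pi_i$; $S$ preserves products strictly; the tensorial strength $\varphi^i_{X_0,\dots,X_n}\in\mathcal L(X_0\otimes\cdots\otimes SX_i\otimes\cdots\otimes X_n,S(X_0\otimes\cdots\otimes X_n))$ is characterised by $\pi_j\circ\varphi^i=X_0\otimes\cdots\otimes\pi_j\otimes\cdots\otimes X_n$; $L_{X_0,X_1}\in\mathcal L(SX_0\otimes SX_1,S(X_0\otimes X_1))$ with $\pi_0L=\pi_0\otimes\pi_0$, $\pi_1L=\pi_1\otimes\pi_0+\pi_0\otimes\pi_1$. A natural $\partial_X\in\mathcal L(!SX,S!X)$ satisfies: $\pi_0\partial_X=!\pi_0$; $\partial_X\circ!\iota_0=\iota_0$, $\tau\circ S\partial_X\circ\partial_{SX}=\partial_X\circ!\tau$; $S\mathrm{der}_X\circ\partial_X=\mathrm{der}_{SX}$, $S\mathrm{dig}_X\circ\partial_X=\partial_{!X}\circ!\partial_X\circ\mathrm{dig}_{SX}$; $S(m^0)^{-1}\partial_\top=\iota_0(m^0)^{-1}!0$, $S(m^2)^{-1}\partial_{X_0\&X_1}=L_{!X_0,!X_1}(\partial_{X_0}\otimes\partial_{X_1})(m^2_{SX_0,SX_1})^{-1}$; $c\circ S\partial_X\circ\partial_{SX}=S\partial_X\circ\partial_{SX}\circ!c$.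 $D$ is the functor on $\mathcal L_!$ with $DX=SX$, $Df=Sf\circ\partial_X$; $\psi^i=\lambda(\iota_0\&\cdots\&SX_i\&\cdots\&\iota_0)\in\mathcal L_!(X_0\&\cdots\&SX_i\&\cdots\&X_n,S(X_0\&\cdots\&X_n))$; $D_if=Df\circ_!\psi^i$. *)

Set Implicit Arguments.
Unset Strict Implicit.

Record CDRC := {
  ob : Type;
  hom : ob -> ob -> Type;
  idm : forall X, hom X X;
  cmp : forall X Y Z, hom Y Z -> hom X Y -> hom X Z;
  tob : ob -> ob -> ob;
  tm : forall A B A' B', hom A B -> hom A' B' -> hom (tob A A') (tob B B');
  unit : ob;
  asc : forall A B D, hom (tob (tob A B) D) (tob A (tob B D));
  asci : forall A B D, hom (tob A (tob B D)) (tob (tob A B) D);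
  lun : forall A, hom (tob unit A) A;
  luni : forall A, hom A (tob unit A);
  run : forall A, hom (tob A unit) A;
  runi : forall A, hom A (tob A unit);
  sym : forall A B, hom (tob A B) (tob B A);
  lin : ob -> ob -> ob;
  ev : forall A B, hom (tob (lin A B) A) B;
  cur : forall D A B, hom (tob D A) B -> hom D (lin A B);
  zero : forall X Y, hom X Y;
  wob : ob -> ob -> ob;
  top : ob;
  p0 : forall A B, hom (wob A B) A;
  p1 : forall A B, hom (wob A B) B;
  pair : forall Z A B, hom Z A -> hom Z B -> hom Z (wob A B);
  term : forall Z, hom Z top;
  bang : ob -> ob;
  bm : forall A B, hom A B -> hom (bang A) (bang B);
  der : forall A, hom (bang A) A;
  dig : forall A, hom (bang A) (bang (bang A));
  (* Seely isomorphisms *)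
  m0 : hom unit (bang top);
  m0i : hom (bang top) unit;
  m2 : forall A B, hom (tob (bang A) (bang B)) (bang (wob A B));
  m2i : forall A B, hom (bang (wob A B)) (tob (bang A) (bang B));
  Sob : ob -> ob;
  Sm : forall A B, hom A B -> hom (Sob A) (Sob B);
  pi0 : forall A, hom (Sob A) A;
  pi1 : forall A, hom (Sob A) A;
  sig : forall A, hom (Sob A) A;
  iota0 : forall A, hom A (Sob A);
  tau : forall A, hom (Sob (Sob A)) (Sob A);
  flip : forall A, hom (Sob (Sob A)) (Sob (Sob A));
  Lst : forall A B, hom (tob (Sob A) (Sob B)) (Sob (tob A B));
  (* strict preservation of binary products: the inverse of <S p0, S p1> *)
  sp : forall A B, hom (wob (Sob A) (Sob B)) (Sob (wob A B));
  dif : forall A, hom (bang (Sob A)) (Sob (bang A))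
}.

Arguments hom {c} _ _.
Arguments idm {c} X.
Arguments cmp {c X Y Z} _ _.
Arguments tob {c} _ _.
Arguments tm {c A B A' B'} _ _.
Arguments unit {c}.
Arguments asc {c} A B D.
Arguments asci {c} A B D.
Arguments lun {c} A.
Arguments luni {c} A.
Arguments run {c} A.
Arguments runi {c} A.
Arguments sym {c} A B.
Arguments lin {c} _ _.
Arguments ev {c} A B.
Arguments cur {c D A B} _.
Arguments zero {c} X Y.
Arguments wob {c} _ _.
Arguments top {c}.
Arguments p0 {c} A B.
Arguments p1 {c} A B.
Arguments pair {c Z A B} _ _.
Arguments term {c} Z.
Arguments bang {c} _.
Arguments bm {c A B} _.
Arguments der {c} A.
Arguments dig {c} A.
Arguments m0 {c}.
Arguments m0i {c}.
Arguments m2 {c} A B.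
Arguments m2i {c} A B.
Arguments Sob {c} _.
Arguments Sm {c A B} _.
Arguments pi0 {c} A.
Arguments pi1 {c} A.
Arguments sig {c} A.
Arguments iota0 {c} A.
Arguments tau {c} A.
Arguments flip {c} A.
Arguments Lst {c} A B.
Arguments sp {c} A B.
Arguments dif {c} A.

Section Derived.
Variable C : CDRC.
Local Notation ob := (ob C).

Definition wm {A B A' B' : ob} (f : hom A B) (g : hom A' B') :
  hom (wob A A') (wob B B') := pair (cmp f (p0 A A')) (cmp g (p1 A A')).

(* partial sums: s = f + g, witnessed through S *)
Definition is_sum {X Y : ob} (f g s : hom X Y) : Prop :=
  exists h : hom X (Sob Y),
    cmp (pi0 Y) h = f /\ cmp (pi1 Y) h = g /\ cmp (sig Y) h = s.

Definition piB (b : bool) (A : ob) : hom (Sob A) A :=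
  if b then pi1 A else pi0 A.

Definition kcmp {X Y Z : ob} (g : hom (bang Y) Z) (f : hom (bang X) Y) :
  hom (bang X) Z := cmp g (cmp (bm f) (dig X)).
Definition klift {X Y : ob} (h : hom X Y) : hom (bang X) Y := cmp h (der X).

Definition Dk {X Y : ob} (f : hom (bang X) Y) : hom (bang (Sob X)) (Sob Y) :=
  cmp (Sm f) (dif X).

(* n-ary constructions, for families F : nat -> ob, using indices 0..n *)
Fixpoint tens (F : nat -> ob) (n : nat) : ob :=
  match n with 0 => F 0 | S k => tob (tens F k) (F (S k)) end.
Fixpoint tenm (F G : nat -> ob) (f : forall k, hom (F k) (G k)) (n : nat) :
  hom (tens F n) (tens G n) :=
  match n with 0 => f 0 | S k => tm (tenm f k) (f (S k)) end.
Fixpoint prods (F : nat -> ob) (n : nat) : ob :=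
  match n with 0 => F 0 | S k => wob (prods F k) (F (S k)) end.
Fixpoint prodm (F G : nat -> ob) (f : forall k, hom (F k) (G k)) (n : nat) :
  hom (prods F n) (prods G n) :=
  match n with 0 => f 0 | S k => wm (prodm f k) (f (S k)) end.

Fixpoint mN (F : nat -> ob) (n : nat) :
  hom (tens (fun k => bang (F k)) n) (bang (prods F n)) :=
  match n with
  | 0 => idm _
  | S k => cmp (m2 (prods F k) (F (S k))) (tm (mN F k) (idm _))
  end.
Fixpoint mNi (F : nat -> ob) (n : nat) :
  hom (bang (prods F n)) (tens (fun k => bang (F k)) n) :=
  match n with
  | 0 => idm _
  | S k => cmp (tm (mNi F k) (idm _)) (m2i (prods F k) (F (S k)))
  end.

Fixpoint spN (F : nat -> ob) (n : nat) :
  hom (prods (fun k => Sob (F k)) n) (Sob (prods F n)) :=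
  match n with
  | 0 => idm _
  | S k => cmp (sp (prods F k) (F (S k))) (wm (spN F k) (idm _))
  end.

Definition Mk (F : nat -> ob) (n : nat) (Y : ob) (l : hom (tens F n) Y) :
  hom (bang (prods F n)) Y :=
  cmp l (cmp (tenm (fun k => der (F k)) n) (mNi F n)).

Definition slot (X : nat -> ob) (i : nat) (A : ob) (k : nat) : ob :=
  if Nat.eqb k i then A else X k.
Definition slotm (X : nat -> ob) (i : nat) (A B : ob) (f : hom A B) (k : nat) :
  hom (slot X i A k) (slot X i B k) :=
  match Nat.eqb k i as b return hom (if b then A else X k) (if b then B else X k)
  with true => f | false => idm (X k) end.
Definition slotpsi (X : nat -> ob) (i : nat) (k : nat) :
  hom (slot X i (Sob (X i)) k) (Sob (slot X i (X i) k)) :=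
  match Nat.eqb k i as b
    return hom (if b then Sob (X i) else X k) (Sob (if b then X i else X k))
  with true => idm (Sob (X i)) | false => iota0 (X k) end.

Definition psi (X : nat -> ob) (i n : nat) :
  hom (bang (prods (slot X i (Sob (X i))) n)) (Sob (prods (slot X i (X i)) n)) :=
  klift (cmp (spN (slot X i (X i)) n) (prodm (slotpsi X i) n)).

Definition Di (X : nat -> ob) (i n : nat) (Y : ob)
  (f : hom (bang (prods (slot X i (X i)) n)) Y) :
  hom (bang (prods (slot X i (Sob (X i))) n)) (Sob Y) :=
  kcmp (Dk f) (psi X i n).

End Derived.

Arguments wm {C A B A' B'} _ _.
Arguments is_sum {C X Y} _ _ _.
Arguments piB {C} b A.
Arguments kcmp {C X Y Z} _ _.
Arguments klift {C X Y} _.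
Arguments Dk {C X Y} _.
Arguments tens {C} F n.
Arguments tenm {C F G} f n.
Arguments prods {C} F n.
Arguments prodm {C F G} f n.
Arguments mN {C} F n.
Arguments mNi {C} F n.
Arguments spN {C} F n.
Arguments Mk {C F n Y} l.
Arguments slot {C} X i A k.
Arguments slotm {C} X i {A B} f k.
Arguments slotpsi {C} X i k.
Arguments psi {C} X i n.
Arguments Di {C} X i n {Y} f.

Record CDRC_axioms (C : CDRC) : Prop := {
  ax_assoc : forall (W X Y Z : ob C) (h : hom Y Z) (g : hom X Y) (f : hom W X),
      cmp h (cmp g f) = cmp (cmp h g) f;
  ax_idl : forall (X Y : ob C) (f : hom X Y), cmp (idm Y) f = f;
  ax_idr : forall (X Y : ob C) (f : hom X Y), cmp f (idm X) = f;
  ax_tm_id : forall A B : ob C, tm (idm A) (idm B) = idm (tob A B);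
  ax_tm_cmp : forall (A B D A' B' D' : ob C) (g : hom B D) (f : hom A B)
      (g' : hom B' D') (f' : hom A' B'),
      tm (cmp g f) (cmp g' f') = cmp (tm g g') (tm f f');
  ax_asc_nat : forall (A A' B B' D D' : ob C) (f : hom A A') (g : hom B B') (h : hom D D'),
      cmp (asc A' B' D') (tm (tm f g) h) = cmp (tm f (tm g h)) (asc A B D);
  ax_asc_iso1 : forall A B D : ob C, cmp (asci A B D) (asc A B D) = idm _;
  ax_asc_iso2 : forall A B D : ob C, cmp (asc A B D) (asci A B D) = idm _;
  ax_lun_nat : forall (A B : ob C) (f : hom A B),
      cmp (lun B) (tm (idm unit) f) = cmp f (lun A);
  ax_lun_iso1 : forall A : ob C, cmp (luni A) (lun A) = idm _;
  ax_lun_iso2 : forall A : ob C, cmp (lun A) (luni A) = idm _;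
  ax_run_nat : forall (A B : ob C) (f : hom A B),
      cmp (run B) (tm f (idm unit)) = cmp f (run A);
  ax_run_iso1 : forall A : ob C, cmp (runi A) (run A) = idm _;
  ax_run_iso2 : forall A : ob C, cmp (run A) (runi A) = idm _;
  ax_sym_nat : forall (A A' B B' : ob C) (f : hom A A') (g : hom B B'),
      cmp (sym A' B') (tm f g) = cmp (tm g f) (sym A B);
  ax_sym_inv : forall A B : ob C, cmp (sym B A) (sym A B) = idm _;
  ax_pentagon : forall A B D E : ob C,
      cmp (asc A B (tob D E)) (asc (tob A B) D E)
      = cmp (tm (idm A) (asc B D E)) (cmp (asc A (tob B D) E) (tm (asc A B D) (idm E)));
  ax_triangle : forall A B : ob C,
      cmp (tm (idm A) (lun B)) (asc A unit B) = tm (run A) (idm B);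
  ax_hexagon : forall A B D : ob C,
      cmp (asc B D A) (cmp (sym A (tob B D)) (asc A B D))
      = cmp (tm (idm B) (sym A D)) (cmp (asc B A D) (tm (sym A B) (idm D)));
  ax_ev_cur : forall (D A B : ob C) (f : hom (tob D A) B),
      cmp (ev A B) (tm (cur f) (idm A)) = f;
  ax_cur_ev : forall (D A B : ob C) (g : hom D (lin A B)),
      cur (cmp (ev A B) (tm g (idm A))) = g;
  ax_zero_l : forall (X Y Z : ob C) (f : hom X Y), cmp (zero Y Z) f = zero X Z;
  ax_zero_r : forall (X Y Z : ob C) (g : hom Y Z), cmp g (zero X Y) = zero X Z;
  ax_tm_zero_l : forall (A B A' B' : ob C) (f : hom A' B'),
      tm (zero A B) f = zero _ _;
  ax_tm_zero_r : forall (A B A' B' : ob C) (f : hom A B),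
      tm f (zero A' B') = zero _ _;
  ax_p0_pair : forall (Z A B : ob C) (f : hom Z A) (g : hom Z B),
      cmp (p0 A B) (pair f g) = f;
  ax_p1_pair : forall (Z A B : ob C) (f : hom Z A) (g : hom Z B),
      cmp (p1 A B) (pair f g) = g;
  ax_pair_eta : forall (Z A B : ob C) (h : hom Z (wob A B)),
      pair (cmp (p0 A B) h) (cmp (p1 A B) h) = h;
  ax_term : forall (Z : ob C) (f : hom Z top), f = term Z;
  ax_bm_id : forall A : ob C, bm (idm A) = idm (bang A);
  ax_bm_cmp : forall (A B D : ob C) (g : hom B D) (f : hom A B),
      bm (cmp g f) = cmp (bm g) (bm f);
  ax_der_nat : forall (A B : ob C) (f : hom A B), cmp (der B) (bm f) = cmp f (der A);
  ax_dig_nat : forall (A B : ob C) (f : hom A B),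
      cmp (dig B) (bm f) = cmp (bm (bm f)) (dig A);
  ax_der_dig : forall A : ob C, cmp (der (bang A)) (dig A) = idm _;
  ax_bder_dig : forall A : ob C, cmp (bm (der A)) (dig A) = idm _;
  ax_dig_dig : forall A : ob C, cmp (bm (dig A)) (dig A) = cmp (dig (bang A)) (dig A);
  ax_m0_iso1 : cmp (m0i (c:=C)) m0 = idm _;
  ax_m0_iso2 : cmp (m0 (c:=C)) m0i = idm _;
  ax_m2_iso1 : forall A B : ob C, cmp (m2i A B) (m2 A B) = idm _;
  ax_m2_iso2 : forall A B : ob C, cmp (m2 A B) (m2i A B) = idm _;
  ax_m2_nat : forall (A A' B B' : ob C) (f : hom A A') (g : hom B B'),
      cmp (m2 A' B') (tm (bm f) (bm g)) = cmp (bm (wm f g)) (m2 A B);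
  ax_m2_assoc : forall A B D : ob C,
      cmp (m2 (wob A B) D) (tm (m2 A B) (idm (bang D)))
      = cmp (bm (pair (pair (p0 A (wob B D)) (cmp (p0 B D) (p1 A (wob B D))))
                      (cmp (p1 B D) (p1 A (wob B D)))))
          (cmp (m2 A (wob B D)) (cmp (tm (idm (bang A)) (m2 B D)) (asc _ _ _)));
  ax_m2_unit : forall A : ob C,
      cmp (m2 top A) (cmp (tm m0 (idm (bang A))) (luni (bang A)))
      = bm (pair (term A) (idm A));
  ax_m2_sym : forall A B : ob C,
      cmp (m2 B A) (sym (bang A) (bang B)) = cmp (bm (pair (p1 A B) (p0 A B))) (m2 A B);
  ax_Sm_id : forall A : ob C, Sm (idm A) = idm (Sob A);
  ax_Sm_cmp : forall (A B D : ob C) (g : hom B D) (f : hom A B),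
      Sm (cmp g f) = cmp (Sm g) (Sm f);
  ax_pi0_nat : forall (A B : ob C) (f : hom A B), cmp (pi0 B) (Sm f) = cmp f (pi0 A);
  ax_pi1_nat : forall (A B : ob C) (f : hom A B), cmp (pi1 B) (Sm f) = cmp f (pi1 A);
  ax_sig_nat : forall (A B : ob C) (f : hom A B), cmp (sig B) (Sm f) = cmp f (sig A);
  ax_pi_monic : forall (Z A : ob C) (f g : hom Z (Sob A)),
      cmp (pi0 A) f = cmp (pi0 A) g -> cmp (pi1 A) f = cmp (pi1 A) g -> f = g;
  ax_sum_zero_r : forall (X Y : ob C) (f : hom X Y), is_sum f (zero X Y) f;
  ax_sum_zero_l : forall (X Y : ob C) (f : hom X Y), is_sum (zero X Y) f f;
  ax_sum_comm : forall (X Y : ob C) (f g s : hom X Y), is_sum f g s -> is_sum g f s;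
  ax_sum_assoc : forall (X Y : ob C) (f g h s t : hom X Y),
      is_sum f g s -> is_sum s h t -> exists u, is_sum g h u /\ is_sum f u t;
  ax_sum_cmp_l : forall (X Y Z : ob C) (k : hom Y Z) (f g s : hom X Y),
      is_sum f g s -> is_sum (cmp k f) (cmp k g) (cmp k s);
  ax_sum_cmp_r : forall (W X Y : ob C) (k : hom W X) (f g s : hom X Y),
      is_sum f g s -> is_sum (cmp f k) (cmp g k) (cmp s k);
  ax_sum_tm_l : forall (A B A' B' : ob C) (k : hom A' B') (f g s : hom A B),
      is_sum f g s -> is_sum (tm f k) (tm g k) (tm s k);
  ax_sum_tm_r : forall (A B A' B' : ob C) (k : hom A B) (f g s : hom A' B'),
      is_sum f g s -> is_sum (tm k f) (tm k g) (tm k s);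
  ax_iota0_0 : forall A : ob C, cmp (pi0 A) (iota0 A) = idm A;
  ax_iota0_1 : forall A : ob C, cmp (pi1 A) (iota0 A) = zero A A;
  ax_tau_0 : forall A : ob C, cmp (pi0 A) (tau A) = cmp (pi0 A) (pi0 (Sob A));
  ax_tau_1 : forall A : ob C,
      is_sum (cmp (pi1 A) (pi0 (Sob A))) (cmp (pi0 A) (pi1 (Sob A))) (cmp (pi1 A) (tau A));
  ax_flip : forall (A : ob C) (b b' : bool),
      cmp (piB b A) (cmp (piB b' (Sob A)) (flip A)) = cmp (piB b' A) (piB b (Sob A));
  ax_L_0 : forall A B : ob C, cmp (pi0 (tob A B)) (Lst A B) = tm (pi0 A) (pi0 B);
  ax_L_1 : forall A B : ob C,
      is_sum (tm (pi1 A) (pi0 B)) (tm (pi0 A) (pi1 B)) (cmp (pi1 (tob A B)) (Lst A B));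
  ax_sp_0 : forall A B : ob C, cmp (Sm (p0 A B)) (sp A B) = p0 (Sob A) (Sob B);
  ax_sp_1 : forall A B : ob C, cmp (Sm (p1 A B)) (sp A B) = p1 (Sob A) (Sob B);
  ax_sp_iso : forall A B : ob C,
      cmp (sp A B) (pair (Sm (p0 A B)) (Sm (p1 A B))) = idm (Sob (wob A B));
  ax_S_top : forall (Z : ob C) (f g : hom Z (Sob top)), f = g;
  ax_dif_nat : forall (A B : ob C) (f : hom A B),
      cmp (Sm (bm f)) (dif A) = cmp (dif B) (bm (Sm f));
  ax_dif_pi0 : forall A : ob C, cmp (pi0 (bang A)) (dif A) = bm (pi0 A);
  ax_dif_iota0 : forall A : ob C, cmp (dif A) (bm (iota0 A)) = iota0 (bang A);
  ax_dif_tau : forall A : ob C,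
      cmp (tau (bang A)) (cmp (Sm (dif A)) (dif (Sob A))) = cmp (dif A) (bm (tau A));
  ax_dif_der : forall A : ob C, cmp (Sm (der A)) (dif A) = der (Sob A);
  ax_dif_dig : forall A : ob C,
      cmp (Sm (dig A)) (dif A) = cmp (dif (bang A)) (cmp (bm (dif A)) (dig (Sob A)));
  ax_dif_m0 : cmp (Sm (m0i (c:=C))) (dif top)
              = cmp (iota0 unit) (cmp m0i (bm (zero (Sob top) top)));
  ax_dif_m2 : forall A B : ob C,
      cmp (Sm (m2i A B)) (cmp (dif (wob A B)) (bm (sp A B)))
      = cmp (Lst (bang A) (bang B)) (cmp (tm (dif A) (dif B)) (m2i (Sob A) (Sob B)));
  ax_dif_flip : forall A : ob C,
      cmp (flip (bang A)) (cmp (Sm (dif A)) (dif (Sob A)))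
      = cmp (Sm (dif A)) (cmp (dif (Sob A)) (bm (flip A)))
}.

(** By the Seely axiom for [∂] on binary products, differentiating the
    Kleisli map [(der ⊗ ⋯ ⊗ der) ∘ (mⁿ)⁻¹] along [!(ι₀ & ⋯ & S X_i & ⋯ & ι₀)]
    yields the n-ary Leibniz map [L] applied to [ι₀ ⊗ ⋯ ⊗ S X_i ⊗ ⋯ ⊗ ι₀].
    That composite is the strength [φ^i]: its [π₀]-component is the identity
    tensor, and its [π₁]-component is a sum over the factors in which every
    summand but the one in position [i] contains [π₁ ι₀ = 0]; as [π₀, π₁] are
    jointly monic, these components determine [φ^i]. Hence
    [D_i M(l) = M(S l ∘ φ^i)], and the second equation follows from naturality
    of [π_j] and [π_j ∘ φ^i = X_0 ⊗ ⋯ ⊗ π_j ⊗ ⋯ ⊗ X_n]. *)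
From Stdlib Require Import Lia PeanoNat.

Section CoherentDifferentiation.
Context {C : CDRC} (HC : CDRC_axioms C).

Ltac rassoc := repeat rewrite <- (ax_assoc HC).

Lemma cmp_rw {W X Y Z : ob C} {a : hom Y Z} {b : hom X Y} {c : hom X Z} {x : hom W X} :
  cmp a b = c -> cmp a (cmp b x) = cmp c x.
Proof. intros <-. apply (ax_assoc HC). Qed.

Lemma cmp_rw3 {V W X Y Z : ob C} {a : hom Y Z} {b : hom X Y} {c : hom W X}
  {d : hom W Z} {x : hom V W} :
  cmp a (cmp b c) = d -> cmp a (cmp b (cmp c x)) = cmp d x.
Proof. intros <-. rewrite (ax_assoc HC b). apply cmp_rw. reflexivity. Qed.

Lemma is_sum_unique {X Y : ob C} {f g s s' : hom X Y} :
  is_sum f g s -> is_sum f g s' -> s = s'.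
Proof.
  intros [h [H0 [H1 H2]]] [h' [H0' [H1' H2']]].
  assert (h = h') as <- by (apply (ax_pi_monic HC); congruence).
  congruence.
Qed.

Lemma is_sum_0l {X Y : ob C} {f s : hom X Y} : is_sum (zero X Y) f s -> s = f.
Proof. intro H. exact (is_sum_unique H (ax_sum_zero_l HC f)). Qed.

Lemma is_sum_0r {X Y : ob C} {f s : hom X Y} : is_sum f (zero X Y) s -> s = f.
Proof. intro H. exact (is_sum_unique H (ax_sum_zero_r HC f)). Qed.

Lemma piB_nat (b : bool) {A B : ob C} (f : hom A B) :
  cmp (piB b B) (Sm f) = cmp f (piB b A).
Proof. destruct b; [apply (ax_pi1_nat HC) | apply (ax_pi0_nat HC)]. Qed.

Lemma pair_cmp {W Z A B : ob C} (f : hom Z A) (g : hom Z B) (h : hom W Z) :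
  cmp (pair f g) h = pair (cmp f h) (cmp g h).
Proof.
  rewrite <- (ax_pair_eta HC (cmp (pair f g) h)).
  rewrite !(ax_assoc HC), (ax_p0_pair HC), (ax_p1_pair HC).
  reflexivity.
Qed.

Lemma wm_cmp {A B D A' B' D' : ob C}
  (f : hom B D) (g : hom B' D') (f' : hom A B) (g' : hom A' B') :
  cmp (wm f g) (wm f' g') = wm (cmp f f') (cmp g g').
Proof.
  unfold wm. rewrite pair_cmp. rassoc.
  rewrite (ax_p0_pair HC), (ax_p1_pair HC).
  reflexivity.
Qed.

Lemma m2i_nat {A A' B B' : ob C} (f : hom A A') (g : hom B B') :
  cmp (m2i A' B') (bm (wm f g)) = cmp (tm (bm f) (bm g)) (m2i A B).
Proof.
  rewrite <- (ax_idr HC (cmp (m2i A' B') (bm (wm f g)))), <- (ax_m2_iso2 HC A B).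
  rewrite (ax_assoc HC), <- (ax_assoc HC (m2i A' B')), <- (ax_m2_nat HC).
  rewrite !(ax_assoc HC), (ax_m2_iso1 HC), (ax_idl HC).
  reflexivity.
Qed.

Lemma Sm_tm_Lst {A A' B B' : ob C} (f : hom A A') (g : hom B B') :
  cmp (Sm (tm f g)) (Lst A B) = cmp (Lst A' B') (tm (Sm f) (Sm g)).
Proof.
  apply (ax_pi_monic HC).
  - rewrite !(ax_assoc HC), (ax_pi0_nat HC), (ax_L_0 HC), <- (ax_assoc HC), (ax_L_0 HC).
    rewrite <- !(ax_tm_cmp HC), !(ax_pi0_nat HC).
    reflexivity.
  - pose proof (ax_sum_cmp_l HC (tm f g) (ax_L_1 HC A B)) as Hl.
    pose proof (ax_sum_cmp_r HC (tm (Sm f) (Sm g)) (ax_L_1 HC A' B')) as Hr.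
    rewrite <- !(ax_tm_cmp HC), !(ax_pi0_nat HC), !(ax_pi1_nat HC) in Hr.
    rewrite <- !(ax_tm_cmp HC) in Hl.
    rewrite !(ax_assoc HC), (ax_pi1_nat HC), <- (ax_assoc HC).
    exact (is_sum_unique Hl Hr).
Qed.

Lemma pi1_Lst_tm {Z W A B : ob C} (f : hom Z (Sob A)) (g : hom W (Sob B)) :
  is_sum (tm (cmp (pi1 A) f) (cmp (pi0 B) g)) (tm (cmp (pi0 A) f) (cmp (pi1 B) g))
         (cmp (pi1 (tob A B)) (cmp (Lst A B) (tm f g))).
Proof.
  rewrite (ax_assoc HC), !(ax_tm_cmp HC).
  apply (ax_sum_cmp_r HC), (ax_L_1 HC).
Qed.

Lemma Dk_cmp {A B D : ob C} (g : hom B D) (f : hom (bang A) B) :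
  Dk (cmp g f) = cmp (Sm g) (Dk f).
Proof. unfold Dk. rewrite (ax_Sm_cmp HC). symmetry. apply (ax_assoc HC). Qed.

Lemma Dk_der {Z A : ob C} (f : hom Z (Sob A)) :
  cmp (Dk (der A)) (bm f) = cmp f (der Z).
Proof. unfold Dk. rewrite (ax_dif_der HC). apply (ax_der_nat HC). Qed.

Lemma Dk_tm_m2i {A B A' B' Z W : ob C} (a : hom (bang A) A') (b : hom (bang B) B')
  (s : hom Z (Sob A)) (t : hom W (Sob B)) :
  cmp (Dk (cmp (tm a b) (m2i A B))) (bm (cmp (sp A B) (wm s t)))
  = cmp (Lst A' B') (cmp (tm (cmp (Dk a) (bm s)) (cmp (Dk b) (bm t))) (m2i Z W)).
Proof.
  unfold Dk. rewrite (ax_Sm_cmp HC), (ax_bm_cmp HC). rassoc.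
  rewrite (cmp_rw3 (ax_dif_m2 HC A B)). rassoc.
  rewrite m2i_nat, (cmp_rw (Sm_tm_Lst a b)). rassoc.
  rewrite !(cmp_rw (eq_sym (ax_tm_cmp HC _ _ _ _))).
  rassoc. reflexivity.
Qed.

Lemma kcmp_klift_l {X Y Z : ob C} (g : hom Y Z) (f : hom (bang X) Y) :
  kcmp (klift g) f = cmp g f.
Proof.
  unfold kcmp, klift. rassoc.
  rewrite (cmp_rw (ax_der_nat HC f)). rassoc.
  rewrite (ax_der_dig HC), (ax_idr HC).
  reflexivity.
Qed.

Lemma kcmp_klift_r {X Y Z : ob C} (g : hom (bang Y) Z) (f : hom X Y) :
  kcmp g (klift f) = cmp g (bm f).
Proof.
  unfold kcmp, klift. rewrite (ax_bm_cmp HC). rassoc.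
  rewrite (ax_bder_dig HC), (ax_idr HC).
  reflexivity.
Qed.

Lemma tenm_cmp (F G H : nat -> ob C)
  (g : forall k, hom (G k) (H k)) (f : forall k, hom (F k) (G k)) (n : nat) :
  tenm (fun k => cmp (g k) (f k)) n = cmp (tenm g n) (tenm f n).
Proof.
  induction n as [|n IH]; cbn [tenm]; [reflexivity|].
  rewrite IH, (ax_tm_cmp HC). reflexivity.
Qed.

Lemma tenm_ext (F G : nat -> ob C) (f g : forall k, hom (F k) (G k)) (n : nat) :
  (forall k, k <= n -> f k = g k) -> tenm f n = tenm g n.
Proof.
  induction n as [|n IH]; intro Hfg; cbn [tenm].
  - apply Hfg; lia.
  - rewrite IH, Hfg; auto.
Qed.

Lemma mNi_nat (F G : nat -> ob C) (f : forall k, hom (F k) (G k)) (n : nat) :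
  cmp (mNi G n) (bm (prodm f n))
  = cmp (tenm (F := fun k => bang (F k)) (G := fun k => bang (G k))
           (fun k => bm (f k)) n) (mNi F n).
Proof.
  induction n as [|n IH]; cbn [mNi prodm tenm prods tens].
  - rewrite (ax_idl HC), (ax_idr HC). reflexivity.
  - rewrite <- (ax_assoc HC), m2i_nat, !(ax_assoc HC), <- !(ax_tm_cmp HC).
    rewrite IH, (ax_idl HC), (ax_idr HC).
    reflexivity.
Qed.

Lemma cmp_Mk (F : nat -> ob C) (n : nat) {Y Z : ob C}
  (g : hom Y Z) (l : hom (tens F n) Y) :
  cmp g (Mk l) = Mk (cmp g l).
Proof. unfold Mk. apply (ax_assoc HC). Qed.

Lemma Mk_tenm (F G : nat -> ob C) (n : nat) {Y : ob C}
  (l : hom (tens G n) Y) (f : forall k, hom (F k) (G k)) :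
  Mk (cmp l (tenm f n)) = cmp (Mk l) (bm (prodm f n)).
Proof.
  unfold Mk. rassoc. rewrite mNi_nat.
  rewrite (cmp_rw (eq_sym (tenm_cmp _ _ _ _ _ n))).
  rewrite (cmp_rw (eq_sym (tenm_cmp _ _ _ _ _ n))).
  f_equal. f_equal. apply tenm_ext. intros k _. symmetry. apply (ax_der_nat HC).
Qed.

Fixpoint LstN (A : nat -> ob C) (n : nat) :
  hom (tens (fun k => Sob (A k)) n) (Sob (tens A n)) :=
  match n with
  | 0 => idm _
  | S k => cmp (Lst (tens A k) (A (S k))) (tm (LstN A k) (idm (Sob (A (S k)))))
  end.

Lemma pi0_LstN (A : nat -> ob C) (n : nat) :
  cmp (pi0 _) (LstN A n) = tenm (fun k => pi0 (A k)) n.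
Proof.
  induction n as [|n IH]; cbn [LstN tenm tens].
  - apply (ax_idr HC).
  - rewrite (ax_assoc HC), (ax_L_0 HC), <- (ax_tm_cmp HC), IH, (ax_idr HC).
    reflexivity.
Qed.

(* The n-ary Leibniz rule, obtained by iterating the Seely axiom for [∂]. *)
Lemma Dk_ders_mNi (A B : nat -> ob C) (s : forall k, hom (B k) (Sob (A k))) (n : nat) :
  cmp (Dk (cmp (tenm (fun k => der (A k)) n) (mNi A n)))
      (bm (cmp (spN A n) (prodm s n)))
  = cmp (LstN A n) (cmp (tenm (fun k => cmp (s k) (der (B k))) n) (mNi B n)).
Proof.
  induction n as [|n IH]; cbn [tenm mNi spN prodm LstN prods tens].
  - rewrite !(ax_idr HC), !(ax_idl HC). apply Dk_der.
  - rewrite <- (ax_assoc HC (sp _ _)), wm_cmp, (ax_idl HC).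
    rewrite (ax_assoc HC (tm _ _) (tm _ _)), <- (ax_tm_cmp HC), (ax_idr HC).
    rewrite Dk_tm_m2i, IH, Dk_der. rassoc.
    rewrite !(cmp_rw (eq_sym (ax_tm_cmp HC _ _ _ _))), (ax_idl HC), (ax_idr HC).
    rassoc. reflexivity.
Qed.

Lemma slotm_other (X : nat -> ob C) (i k : nat) {A B : ob C} (f g : hom A B) :
  k <> i -> slotm X i f k = slotm X i g k.
Proof.
  intro Hki. apply Nat.eqb_neq in Hki. revert Hki.
  unfold slotm, slot. destruct (Nat.eqb k i); [discriminate | reflexivity].
Qed.

Lemma pi0_slotpsi (X : nat -> ob C) (i k : nat) :
  cmp (pi0 _) (slotpsi X i k) = slotm X i (pi0 (X i)) k.
Proof.
  unfold slotpsi, slotm, slot.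
  destruct (Nat.eqb k i); [apply (ax_idr HC) | apply (ax_iota0_0 HC)].
Qed.

Lemma pi1_slotpsi_self (X : nat -> ob C) (i k : nat) :
  k = i -> cmp (pi1 _) (slotpsi X i k) = slotm X i (pi1 (X i)) k.
Proof.
  intros ->. pose proof (Nat.eqb_refl i) as Hii. revert Hii.
  unfold slotpsi, slotm, slot. destruct (Nat.eqb i i); [intros _ | discriminate].
  apply (ax_idr HC).
Qed.

Lemma pi1_slotpsi_other (X : nat -> ob C) (i k : nat) :
  k <> i -> cmp (pi1 _) (slotpsi X i k) = zero _ _.
Proof.
  intro Hki. apply Nat.eqb_neq in Hki. revert Hki.
  unfold slotpsi, slot. destruct (Nat.eqb k i); [discriminate | intros _].
  apply (ax_iota0_1 HC).
Qed.

(* The strength [φ^i], in the form [L ∘ (ι₀ ⊗ ⋯ ⊗ S X_i ⊗ ⋯ ⊗ ι₀)] produced by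
   differentiating [M(l)]. *)
Definition strength (X : nat -> ob C) (i n : nat) :
  hom (tens (slot X i (Sob (X i))) n) (Sob (tens (slot X i (X i)) n)) :=
  cmp (LstN (slot X i (X i)) n) (tenm (slotpsi X i) n).

Lemma strength_S (X : nat -> ob C) (i n : nat) :
  strength X i (S n)
  = cmp (Lst _ _) (tm (strength X i n) (slotpsi X i (S n))).
Proof.
  unfold strength. cbn [LstN tenm tens]. rassoc.
  rewrite <- (ax_tm_cmp HC), (ax_idl HC).
  reflexivity.
Qed.

Lemma pi0_strength (X : nat -> ob C) (i n : nat) :
  cmp (pi0 _) (strength X i n) = tenm (slotm X i (pi0 (X i))) n.
Proof.
  unfold strength. rewrite (ax_assoc HC), pi0_LstN, <- tenm_cmp.
  apply tenm_ext. intros k _. apply pi0_slotpsi.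
Qed.

Lemma pi1_strength_lt (X : nat -> ob C) (i n : nat) :
  n < i -> cmp (pi1 _) (strength X i n) = zero _ _.
Proof.
  induction n as [|n IH]; intro Hn.
  - unfold strength. cbn [LstN tenm tens]. rewrite (ax_idl HC).
    apply pi1_slotpsi_other. lia.
  - rewrite strength_S.
    pose proof (pi1_Lst_tm (strength X i n) (slotpsi X i (S n))) as Hsum.
    rewrite IH, pi1_slotpsi_other, (ax_tm_zero_l HC), (ax_tm_zero_r HC) in Hsum by lia.
    exact (is_sum_0l Hsum).
Qed.

Lemma pi1_strength (X : nat -> ob C) (i n : nat) :
  i <= n -> cmp (pi1 _) (strength X i n) = tenm (slotm X i (pi1 (X i))) n.
Proof.
  induction n as [|n IH]; intro Hin.
  - unfold strength. cbn [LstN tenm tens]. rewrite (ax_idl HC).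
    apply pi1_slotpsi_self. lia.
  - rewrite strength_S. cbn [tenm tens].
    pose proof (pi1_Lst_tm (strength X i n) (slotpsi X i (S n))) as Hsum.
    destruct (Nat.eq_dec i (S n)) as [Hi | Hi].
    + rewrite pi1_strength_lt, pi1_slotpsi_self, (ax_tm_zero_l HC) in Hsum by lia.
      rewrite (is_sum_0l Hsum), pi0_strength.
      f_equal. apply tenm_ext. intros k Hk. apply slotm_other. lia.
    + rewrite IH, pi1_slotpsi_other, (ax_tm_zero_r HC) in Hsum by lia.
      rewrite (is_sum_0r Hsum), pi0_slotpsi.
      f_equal. apply slotm_other. lia.
Qed.

Lemma strength_unique (X : nat -> ob C) (i n : nat)
  (phi : hom (tens (slot X i (Sob (X i))) n) (Sob (tens (slot X i (X i)) n))) :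
  i <= n ->
  (forall b, cmp (piB b _) phi = tenm (slotm X i (piB b (X i))) n) ->
  phi = strength X i n.
Proof.
  intros Hin Hphi. apply (ax_pi_monic HC).
  - rewrite pi0_strength. exact (Hphi false).
  - rewrite pi1_strength by exact Hin. exact (Hphi true).
Qed.

Lemma Di_Mk (X : nat -> ob C) (i n : nat) {Y : ob C} (l : hom (tens (slot X i (X i)) n) Y) :
  Di X i n (Mk l) = Mk (cmp (Sm l) (strength X i n)).
Proof.
  unfold Di, psi. rewrite kcmp_klift_r.
  unfold Mk at 1. rewrite Dk_cmp, <- (ax_assoc HC), Dk_ders_mNi, tenm_cmp.
  unfold Mk, strength. rassoc. reflexivity.
Qed.

End CoherentDifferentiation.

Theorem mainTheorem14 (C : CDRC) (HC : CDRC_axioms C)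
  (X : nat -> ob C) (n i : nat) (Hi : i <= n) (Y : ob C)
  (l : hom (tens (slot X i (X i)) n) Y)
  (phi : hom (tens (slot X i (Sob (X i))) n) (Sob (tens (slot X i (X i)) n)))
  (Hphi : forall b : bool,
      cmp (piB b (tens (slot X i (X i)) n)) phi = tenm (slotm X i (piB b (X i))) n) :
  Di X i n (Mk l) = Mk (cmp (Sm l) phi)
  /\ forall b : bool,
      kcmp (klift (piB b Y)) (Di X i n (Mk l))
      = kcmp (Mk l) (klift (prodm (slotm X i (piB b (X i))) n)).
Proof.
  assert (Hstrength : phi = strength X i n) by exact (strength_unique HC X i n phi Hi Hphi).
  assert (HD : Di X i n (Mk l) = Mk (cmp (Sm l) phi)).
  { rewrite Hstrength. apply (Di_Mk HC). }
  split; [exact HD |]. intro b.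
  rewrite HD, (kcmp_klift_l HC), (kcmp_klift_r HC), (cmp_Mk HC), <- (Mk_tenm HC), <- Hphi.
  rewrite (ax_assoc HC), (piB_nat HC), (ax_assoc HC).
  reflexivity.
Qed.
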